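(* Let $r\ge 3$ and let $G$ be a connected $r$-regular graph. Let $G'$ be the graph with vertex set $V(G)$ in which two distinct vertices are adjacent iff they have a common neighbor in $G$. If $G'$ has a connected component that is a complete graph on $r(r-1)+1$ vertices, then $G$ is the incidence graph of a projective plane of order $r-1$.
   Context: All graphs are finite and simple. A projective plane of order $q$ consists of $q^2+q+1$ points and $q^2+q+1$ lines with an incidence relation such that every line is incident with exactly $q+1$ points, every point with exactly $q+1$ lines, any two distinct points lie on exactly one common line, and any two distinct lines share exactly one common point. Its incidence graph is the bipartite graph whose vertices are the points and the lines, a point being adjacent to a line iff they are incident. *)

From mathcomp Require Import all_boot.
Set Implicit Arguments. Unset Strict Implicit. Unset Printing Implicit Defensive.

Definition simple_graph (T : finType) (e : rel T) : Prop :=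
  symmetric e /\ irreflexive e.

Definition connected_graph (T : finType) (e : rel T) : Prop :=
  forall x y : T, connect e x y.

Definition regular (T : finType) (e : rel T) (r : nat) : Prop :=
  forall x : T, #|[set y | e x y]| = r.

Definition common_nbr_graph (T : finType) (e : rel T) : rel T :=
  fun x y => (x != y) && [exists z, e x z && e z y].

Definition component (T : finType) (e : rel T) (x : T) : {set T} :=
  [set y | connect e x y].

Definition projective_plane (P L : finType) (I : P -> L -> bool) (q : nat) : Prop :=
  #|P| = q ^ 2 + q + 1 /\ #|L| = q ^ 2 + q + 1 /\
  [/\ forall l : L, #|[set p | I p l]| = q.+1,
      forall p : P, #|[set l | I p l]| = q.+1,
      forall p1 p2 : P, p1 != p2 -> #|[set l | I p1 l && I p2 l]| = 1
    & forall l1 l2 : L, l1 != l2 -> #|[set p | I p l1 && I p l2]| = 1].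

Definition incidence_graph (P L : finType) (I : P -> L -> bool) : rel (P + L) :=
  fun u v => match u, v with
             | inl p, inr l => I p l
             | inr l, inl p => I p l
             | _, _ => false
             end.

Definition graph_iso (T U : finType) (e : rel T) (e' : rel U) : Prop :=
  exists f : T -> U, bijective f /\ forall x y : T, e x y = e' (f x) (f y).

From mathcomp Require Import all_boot all_algebra zify ring.
Set Implicit Arguments. Unset Strict Implicit. Unset Printing Implicit Defensive.

(* Let C be the given component of G', a clique of G' with r(r-1)+1 vertices.
   Every u in C reaches the r(r-1) other vertices of C by paths of length two,
   and there are exactly r(r-1) such paths, so they end at distinct vertices.
   The neighbourhood N(C) of C is disjoint from C: otherwise C would be closed
   under adjacency, hence all of G, an r-regular graph in which any two vertices
   have exactly one common neighbour, which the trace argument of the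
   friendship theorem rules out for r >= 3.  So G is bipartite with sides C and
   N(C) = V \ C, which have equal size by double counting; uniqueness of
   length-two paths propagates from C to N(C), so N(C) is a clique of G' as
   well, and C, N(C) are the points and lines of a projective plane of order
   r - 1. *)

Lemma sum_nat_bool_card (T : finType) (A : {pred T}) (F : pred T) :
  \sum_(x in A) (F x : nat) = #|[set x in A | F x]|.
Proof.
rewrite -sum1_card [RHS]big_mkcond [LHS]big_mkcond; apply: eq_bigr => x _.
by rewrite !inE; case: (x \in A); case: (F x).
Qed.

Lemma card_set_sig (T : finType) (A : {set T}) (Q : pred T) :
  #|[set p : {x | x \in A} | Q (val p)]| = #|[set x in A | Q x]|.
Proof.
rewrite -(card_imset _ val_inj); apply: eq_card => x; rewrite inE.
apply/imsetP/andP => [[p + ->]|[xA Qx]]; first by rewrite inE => Qp; split => //; exact: valP.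
by exists (exist _ x xA); rewrite ?inE.
Qed.

Lemma cards1_unique (T : finType) (Q : pred T) z0 :
  Q z0 -> (forall z, Q z -> z = z0) -> #|[set z | Q z]| = 1.
Proof.
move=> Qz0 Q_z0; rewrite (_ : [set z | Q z] = [set z0]) ?cards1 //.
by apply/setP => z; rewrite !inE; apply/idP/eqP => [/Q_z0|->].
Qed.

Lemma connected_closed_setT (T : finType) (e : rel T) (X : {set T}) a :
  symmetric e -> connected_graph e -> a \in X ->
  (forall x y, e x y -> x \in X -> y \in X) -> X = setT.
Proof.
move=> e_sym e_conn aX X_closed; apply/setP => y; rewrite inE.
have cl : closed e X by apply: (intro_closed (sym_connect_sym e_sym)).
by rewrite -(closed_connect cl (e_conn a y)).
Qed.

Lemma regular_edge_closed_card (T : finType) (e : rel T) (r : nat) (A B : {set T}) :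
  symmetric e -> regular e r -> 0 < r ->
  (forall x y, x \in A -> e x y -> y \in B) ->
  (forall x y, x \in B -> e x y -> y \in A) -> #|A| = #|B|.
Proof.
move=> e_sym e_reg r_gt0 AB BA.
have deg_in X x : (forall y, e x y -> y \in X) -> \sum_(y in X) (e x y : nat) = r.
  move=> Xx; rewrite sum_nat_bool_card -(e_reg x); apply: eq_card => y.
  by rewrite !inE; apply/andP/idP => [[]//|exy]; split; first exact: Xx.
apply/eqP; rewrite -(eqn_pmul2r r_gt0) -!sum_nat_const.
rewrite (eq_bigr (fun x => \sum_(y in B) (e x y : nat))); last first.
  by move=> x xA; rewrite deg_in // => y; apply: AB.
rewrite exchange_big; apply/eqP; apply: eq_bigr => y yB.
under eq_bigr do rewrite e_sym.
by rewrite deg_in // => x; apply: BA.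
Qed.

Section SetSum.
Variables (T : finType) (A : {set T}).

Definition set_sum_val (s : {x | x \in A} + {x | x \in ~: A}) : T :=
  match s with inl p => val p | inr q => val q end.

Lemma set_sum_val_bij : bijective set_sum_val.
Proof.
apply: inj_card_bij; last by rewrite card_sum !card_sig -(cardsC A).
case=> [[x xA]|[x xA]] [[y yA]|[y yA]] /= xy; subst y.
- by congr inl; apply: val_inj.
- by have := yA; rewrite inE xA.
- by have := xA; rewrite inE yA.
- by congr inr; apply: val_inj.
Qed.

End SetSum.

Section FriendshipRegular.
Import GRing.Theory.
Local Open Scope ring_scope.

Lemma mxtrace_sqr0 (F : fieldType) n (N : 'M[F]_n) : N *m N = 0 -> \tr N = 0.
Proof.
(* With N = L P U, L and U invertible and P a partial identity, N^2 = 0 forces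
   P (U L) P = 0, while tr N = tr (P (U L) P). *)
move=> NN; have E := mulmx_ebase N.
set L := col_ebase N in E; set U := row_ebase N in E; set P := pid_mx (\rank N) in E.
have PP : P *m P = P by rewrite pid_mx_id ?rank_leq_col.
have PULP : P *m (U *m L) *m P = 0.
  have : L *m (P *m (U *m L) *m P) *m U = 0 by rewrite -NN -E !mulmxA.
  move/(congr1 (fun M => invmx L *m M *m invmx U)).
  by rewrite mulmx0 mul0mx -mulmxA mulmxK ?row_ebase_unit // mulKmx ?col_ebase_unit.
rewrite -E -mulmxA mxtrace_mulC -mulmxA -{1}PP -mulmxA mxtrace_mulC PULP.
exact: mxtrace0.
Qed.

Lemma sum_nbr_compl_mul (R : comNzRingType) (T : finType) (e : rel T) (r : nat) u v :
  symmetric e -> regular e r ->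
  \sum_z ((e u z)%:R - 1) * ((e z v)%:R - 1) =
    #|[set z | e u z && e z v]|%:R - r%:R - r%:R + #|T|%:R :> R.
Proof.
move=> e_sym e_reg.
have card_pred_natr (Q : pred T) : \sum_z (Q z)%:R = #|[set z | Q z]|%:R :> R.
  by rewrite -sum1dep_card natr_sum [RHS]big_mkcond; apply: eq_bigr => z _; case: (Q z).
have deg_v : #|[set z | e z v]| = r.
  by rewrite -(e_reg v); apply: eq_card => z; rewrite !inE e_sym.
have expand (a b : bool) : (a%:R - 1) * (b%:R - 1) = (a && b)%:R - a%:R - b%:R + 1 :> R.
  by case: a; case: b => /=; ring.
under eq_bigr do rewrite expand.
by rewrite !big_split /= !sumrN !card_pred_natr e_reg deg_v sumr_const.
Qed.

Lemma regular_friendship_leq2 (T : finType) (e : rel T) (k : nat) :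
  symmetric e -> irreflexive e -> regular e k -> #|T| = (k * (k - 1) + 1)%N ->
  (forall u v, u != v -> #|[set z | e u z && e z v]| = 1%N) -> (k <= 2)%N.
Proof.
move=> e_sym e_irr e_reg card_T friend; rewrite leqNgt; apply/negP => k_gt2.
set p := pdiv (k - 1).
have p_pr : prime p by apply: pdiv_prime; rewrite ltn_subRL.
have km1_0 : ((k - 1)%:R : 'F_p) = 0.
  by rewrite -(divnK (pdiv_dvd (k - 1))) natrM pchar_Fp_0 // mulr0.
have k_1 : (k%:R : 'F_p) = 1.
  by rewrite -[k](@subnK 1) ?natrD ?km1_0 ?add0r // ltnW // ltnW.
have T_1 : (#|T|%:R : 'F_p) = 1 by rewrite card_T natrD natrM km1_0 mulr0 add0r.
(* Modulo a prime divisor of k - 1, the matrix A - J squares to zero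
   while its trace is -|T| = -1. *)
pose N : 'M['F_p]_#|T| := \matrix_(i, j) ((e (enum_val i) (enum_val j))%:R - 1).
have NN : N *m N = 0.
  apply/matrixP => i j; rewrite !mxE.
  under eq_bigr do rewrite !mxE.
  rewrite -(big_enum_val (fun z => ((e (enum_val i) z)%:R - 1) * ((e z (enum_val j))%:R - 1))).
  rewrite (sum_nbr_compl_mul _ _ _ e_sym e_reg) k_1 T_1.
  suff -> : #|[set z | e (enum_val i) z && e z (enum_val j)]|%:R = 1 :> 'F_p.
    by rewrite subrr sub0r addNr.
  case: (eqVneq (enum_val i) (enum_val j)) => [<-|/friend -> //].
  rewrite -[RHS]k_1 -(e_reg (enum_val i)); congr (_%:R); apply: eq_card => z.
  by rewrite !inE [e z _]e_sym andbb.
have := mxtrace_sqr0 NN; rewrite /mxtrace.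
under eq_bigr do rewrite mxE e_irr.
by rewrite sumr_const card_ord sub0r mulNrn T_1 => /eqP; rewrite oppr_eq0 oner_eq0.
Qed.

End FriendshipRegular.

Section CliqueComponent.
Variables (T : finType) (e : rel T) (r : nat).
Hypotheses (e_sym : symmetric e) (e_reg : regular e r).

Definition paths2 u := [set p : T * T | [&& e u p.1, e p.1 p.2 & p.2 != u]].

Lemma card_paths2 u : #|paths2 u| = r * (r - 1).
Proof.
have nbrsD1 z : e z u -> #|[set y | e z y && (y != u)]| = r - 1.
  move=> ezu; have := cardsD1 u [set y | e z y]; rewrite e_reg inE ezu add1n => ->.
  by rewrite subSS subn0; apply: eq_card => y; rewrite !inE andbC.
rewrite -sum1_card (eq_bigl (fun p : T * T => e u p.1 && (e p.1 p.2 && (p.2 != u)))); last first.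
  by move=> p; rewrite inE.
rewrite -(pair_big_dep (fun z => e u z) (fun z y => e z y && (y != u)) (fun _ _ => 1)) /=.
rewrite (eq_bigr (fun _ => r - 1)) => [|z euz]; last by rewrite sum1dep_card nbrsD1 // e_sym.
by rewrite -(e_reg u) -sum_nat_const; apply: eq_bigl => z; rewrite inE.
Qed.

Lemma common_nbrs_paths2 u :
  [set y | common_nbr_graph e u y] = [set p.2 | p in paths2 u].
Proof.
apply/setP => y; rewrite inE; apply/andP/imsetP.
  case=> uy /existsP[z /andP[euz ezy]]; exists (z, y) => //.
  by rewrite inE /= euz ezy eq_sym uy.
case=> [[z y'] + ->]; rewrite inE /= => /and3P[euz ezy yu]; split; first by rewrite eq_sym.
by apply/existsP; exists z; rewrite euz.
Qed.

Definition unique_paths2 u :=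
  forall z1 z2 y, y != u -> e u z1 -> e z1 y -> e u z2 -> e z2 y -> z1 = z2.

Lemma unique_paths2P u :
  reflect (unique_paths2 u) (#|[set y | common_nbr_graph e u y]| == r * (r - 1)).
Proof.
rewrite common_nbrs_paths2 -(card_paths2 u).
apply: (iffP imset_injP) => [inj z1 z2 y yu e1 e1y e2 e2y | uniq [z1 y1] [z2 y2]].
  have := inj (z1, y) (z2, y); rewrite !inE /= e1 e1y e2 e2y yu.
  by move=> /(_ isT isT erefl) [].
rewrite !inE /= => /and3P[e1 e1y y1u] /and3P[e2 e2y _] y12; subst y2.
by rewrite (uniq z1 z2 y1).
Qed.

Variable C : {set T}.
Hypotheses (C_card : #|C| = r * (r - 1) + 1)
  (C_clique : {in C &, forall y z, y != z -> common_nbr_graph e y z})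
  (C_closed : forall u v, u \in C -> common_nbr_graph e u v -> v \in C).

Lemma common_nbrs_clique u : u \in C -> [set y | common_nbr_graph e u y] = C :\ u.
Proof.
move=> uC; apply/setP => y; rewrite !inE.
case: (eqVneq y u) => [->|yu] /=; first by rewrite /common_nbr_graph eqxx.
apply/idP/idP => [/(C_closed uC)//|yC].
by apply: C_clique; rewrite // eq_sym.
Qed.

Lemma clique_unique_paths2 u : u \in C -> unique_paths2 u.
Proof.
move=> uC; apply/unique_paths2P; rewrite common_nbrs_clique //.
by move: C_card; rewrite (cardsD1 u C) uC add1n addn1 => -[->].
Qed.

Definition nbhd := [set w | [exists u in C, e u w]].

Lemma clique_edge_nbhd u w : u \in C -> e u w -> w \in nbhd.
Proof. by move=> uC euw; rewrite inE; apply/existsP; exists u; rewrite uC. Qed.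

Lemma nbhd_edge_clique w y : w \in nbhd -> e w y -> y \in C.
Proof.
rewrite inE => /existsP[u /andP[uC euw]] ewy.
case: (eqVneq y u) => [->//|yu]; apply: (C_closed uC).
by rewrite /common_nbr_graph eq_sym yu; apply/existsP; exists w; rewrite euw.
Qed.

Hypotheses (e_irr : irreflexive e) (r_gt2 : 2 < r) (e_conn : connected_graph e).

(* Otherwise C would be closed under adjacency, hence all of G, and G would be
   a regular friendship graph. *)
Lemma clique_nbhd_disjoint a : a \in C -> a \notin nbhd.
Proof.
move=> aC; apply/negP => aD.
have C_T : C = setT.
  have CD_T : C :&: nbhd = setT.
    apply: (connected_closed_setT e_sym e_conn (a := a)); first by rewrite inE aC.
    move=> x z exz /setIP[xC xD].
    by rewrite inE (nbhd_edge_clique xD exz) (clique_edge_nbhd xC exz).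
  by apply/eqP; rewrite eqEsubset subsetT -CD_T subsetIl.
suff : r <= 2 by rewrite leqNgt r_gt2.
apply: (regular_friendship_leq2 e_sym e_irr e_reg); first by rewrite -C_card C_T cardsT.
move=> u v uv; have [uC vC] : u \in C /\ v \in C by rewrite C_T !inE.
have /andP[_ /existsP[z0 /andP[euz0 ez0v]]] := C_clique uC vC uv.
apply: (cards1_unique (z0 := z0)) => [|z /andP[euz ezv]]; first by rewrite euz0.
by apply: (clique_unique_paths2 uC) euz ezv euz0 ez0v; rewrite eq_sym.
Qed.

Lemma nbhd_setC : nbhd = ~: C.
Proof.
have [a aC] : exists a, a \in C by apply/set0Pn; rewrite -card_gt0 C_card addn1.
have cover : C :|: nbhd = setT.
  apply: (connected_closed_setT e_sym e_conn (a := a)); first by rewrite inE aC.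
  move=> x y exy /setUP[xC|xD]; rewrite inE.
    by rewrite (clique_edge_nbhd xC exy) orbT.
  by rewrite (nbhd_edge_clique xD exy).
apply/setP => x; rewrite in_setC; case: (boolP (x \in C)) => xC.
  exact/negbTE/clique_nbhd_disjoint.
have : x \in C :|: nbhd by rewrite cover inE.
by rewrite inE (negbTE xC).
Qed.

Lemma card_nbhd : #|nbhd| = #|C|.
Proof.
apply/esym/(regular_edge_closed_card e_sym e_reg); first exact: ltnW (ltnW r_gt2).
  exact: clique_edge_nbhd.
exact: nbhd_edge_clique.
Qed.

Lemma nbhd_unique_paths2 w : w \in nbhd -> unique_paths2 w.
Proof.
move=> wD z1 z2 y yw ewz1 ez1y ewz2 ez2y; apply/eqP/negP => /negP z12.
(* z1 lies in C and reaches z2 both through w and through y. *)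
have wy : w = y.
  apply: (clique_unique_paths2 (nbhd_edge_clique wD ewz1) (y := z2)) => //.
  - by rewrite eq_sym.
  - by rewrite e_sym.
  - by rewrite e_sym.
by rewrite wy eqxx in yw.
Qed.

Lemma common_nbrs_nbhd w : w \in nbhd -> [set y | common_nbr_graph e w y] = nbhd :\ w.
Proof.
move=> wD; apply/eqP; rewrite eqEcard; apply/andP; split.
  apply/subsetP => y; rewrite in_setD1 inE => /andP[wy /existsP[z /andP[ewz ezy]]].
  rewrite eq_sym wy; exact: clique_edge_nbhd (nbhd_edge_clique wD ewz) ezy.
move/unique_paths2P/eqP: (nbhd_unique_paths2 wD) => ->.
by move: (cardsD1 w nbhd); rewrite wD card_nbhd C_card add1n addn1 => -[->].
Qed.

Lemma clique_edge_setC u v : u \in C -> e u v -> v \in ~: C.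
Proof. by rewrite -nbhd_setC; exact: clique_edge_nbhd. Qed.

Lemma setC_edge_clique u v : u \in ~: C -> e u v -> v \in C.
Proof. by rewrite -nbhd_setC; exact: nbhd_edge_clique. Qed.

Definition clique_incidence (p : {x | x \in C}) (l : {x | x \in ~: C}) : bool :=
  e (val p) (val l).

Lemma card_clique_points : #|{: {x | x \in C}}| = r * (r - 1) + 1.
Proof. by rewrite card_sig -C_card. Qed.

Lemma card_clique_lines : #|{: {x | x \in ~: C}}| = r * (r - 1) + 1.
Proof. by rewrite card_sig -C_card -card_nbhd nbhd_setC. Qed.

Lemma clique_line_degree l : #|[set p | clique_incidence p l]| = r.
Proof.
rewrite (card_set_sig C (fun x => e x (val l))) -(e_reg (val l)).
apply: eq_card => x; rewrite !inE e_sym; apply/andP/idP => [[]//|elx]; split=> //.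
exact: setC_edge_clique (valP l) elx.
Qed.

Lemma clique_point_degree p : #|[set l | clique_incidence p l]| = r.
Proof.
rewrite (card_set_sig (~: C) (fun x => e (val p) x)) -(e_reg (val p)).
apply: eq_card => x; rewrite !inE; apply/andP/idP => [[]//|epx]; split=> //.
by have := clique_edge_setC (valP p) epx; rewrite inE.
Qed.

Lemma clique_points_collinear p1 p2 :
  p1 != p2 -> #|[set l | clique_incidence p1 l && clique_incidence p2 l]| = 1.
Proof.
move=> p12; rewrite (card_set_sig (~: C) (fun x => e (val p1) x && e (val p2) x)).
have /andP[_ /existsP[z0 /andP[e1z0 ez02]]] := C_clique (valP p1) (valP p2) p12.
apply: (cards1_unique (z0 := z0)) => [|z /and3P[_ e1z e2z]].
  by rewrite (clique_edge_setC (valP p1) e1z0) e1z0 e_sym ez02.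
apply: (clique_unique_paths2 (valP p1) (y := val p2)) => //.
  by rewrite eq_sym.
by rewrite e_sym.
Qed.

Lemma clique_lines_concurrent l1 l2 :
  l1 != l2 -> #|[set p | clique_incidence p l1 && clique_incidence p l2]| = 1.
Proof.
move=> l12; rewrite (card_set_sig C (fun x => e x (val l1) && e x (val l2))).
have l1D : val l1 \in nbhd by rewrite nbhd_setC (valP l1).
have : val l2 \in [set y | common_nbr_graph e (val l1) y].
  by rewrite common_nbrs_nbhd // in_setD1 eq_sym l12 nbhd_setC (valP l2).
rewrite inE => /andP[_ /existsP[z0 /andP[e1z0 ez02]]].
apply: (cards1_unique (z0 := z0)) => [|z /and3P[zC ez1 ez2]].
  by rewrite (nbhd_edge_clique l1D e1z0) e_sym e1z0 ez02.
apply/eqP/negP => /negP zz0; move/eqP: l12; apply.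
apply: val_inj; apply: (clique_unique_paths2 zC (y := z0)) => //.
  by rewrite eq_sym.
by rewrite e_sym.
Qed.

Lemma clique_incidence_plane : projective_plane clique_incidence (r - 1).
Proof.
have r_eq : (r - 1).+1 = r by rewrite subn1 prednK // ltnW // ltnW.
have size_eq : (r - 1) ^ 2 + (r - 1) + 1 = r * (r - 1) + 1.
  by rewrite -r_eq subSS subn0 /=; lia.
rewrite /projective_plane card_clique_points card_clique_lines size_eq r_eq.
do 2!split=> //; split.
- exact: clique_line_degree.
- exact: clique_point_degree.
- exact: clique_points_collinear.
- exact: clique_lines_concurrent.
Qed.

Lemma clique_incidence_iso : graph_iso e (incidence_graph clique_incidence).
Proof.
have [g valK gK] := set_sum_val_bij C.
exists g; split; first exact: Bijective gK valK.
move=> x y; rewrite -{1}[x]gK -{1}[y]gK.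
case: (g x) => [p|l]; case: (g y) => [p'|l'] /=.
- by apply/negbTE/negP => /(clique_edge_setC (valP p)); rewrite inE (valP p').
- by [].
- by rewrite e_sym.
- by apply/negbTE/negP => /(setC_edge_clique (valP l)); have := valP l'; rewrite inE => /negP.
Qed.

End CliqueComponent.

Theorem mainTheorem2 (T : finType) (e : rel T) (r : nat) :
  3 <= r ->
  simple_graph e -> connected_graph e -> regular e r ->
  (exists x : T,
      #|component (common_nbr_graph e) x| = r * (r - 1) + 1 /\
      {in component (common_nbr_graph e) x &,
         forall y z, y != z -> common_nbr_graph e y z}) ->
  exists (P L : finType) (I : P -> L -> bool),
    projective_plane I (r - 1) /\ graph_iso e (incidence_graph I).
Proof.
move=> r_gt2 [e_sym e_irr] e_conn e_reg [x [C_card C_clique]].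
set C := component (common_nbr_graph e) x in C_card C_clique.
have C_closed u v : u \in C -> common_nbr_graph e u v -> v \in C.
  by rewrite !inE => xu uv; apply: connect_trans xu (connect1 uv).
exists _, _, (@clique_incidence _ e C); split.
  exact: clique_incidence_plane.
exact: clique_incidence_iso.
Qed.
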